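(* Let $\mathcal{E}$ be an ellipse in a real affine plane. Consider two Euclidean structures (positive definite quadratic forms on the plane's vector space) on this plane; each makes the plane Euclidean and thus defines a pair of foci of $\mathcal{E}$ and a major axis of $\mathcal{E}$. Let $\ell$ be a chord of $\mathcal{E}$ passing through two foci, one of each pair. Then the two major axes (each measured with its own Euclidean structure) have equal length if and only if the two Euclidean structures induce equal units of length on the chord $\ell$ (i.e. assign the same length to $\ell$). *)

(* real affine plane modelled as 'rV[R]_2 over R : realType. *)
From HB Require Import structures.
From mathcomp Require Import all_boot all_order all_algebra.
From mathcomp Require Import reals.
Set Implicit Arguments. Unset Strict Implicit. Unset Printing Implicit Defensive.
Import Order.TTheory GRing.Theory Num.Theory.
Local Open Scope ring_scope.

Definition qform {R : realType} (S : 'M[R]_2) (v : 'rV[R]_2) : R :=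
  (v *m S *m v^T) 0 0.

Definition pos_def {R : realType} (S : 'M[R]_2) : Prop :=
  S^T = S /\ forall v : 'rV[R]_2, v != 0 -> 0 < qform S v.

Definition slen {R : realType} (S : 'M[R]_2) (v : 'rV[R]_2) : R :=
  Num.sqrt (qform S v).

Definition is_ellipse {R : realType} (E : 'rV[R]_2 -> Prop) : Prop :=
  exists (Q : 'M[R]_2) (c : 'rV[R]_2),
    pos_def Q /\ forall x, E x <-> qform Q (x - c) = 1.

Definition foci_axis {R : realType} (S : 'M[R]_2) (E : 'rV[R]_2 -> Prop)
  (F1 F2 : 'rV[R]_2) (a : R) : Prop :=
  0 < a /\ forall x, E x <-> slen S (x - F1) + slen S (x - F2) = 2 * a.

Definition major_axis (R : realType) (a : R) : R := 2 * a.

Definition on_segment {R : realType} (P Q F : 'rV[R]_2) : Prop :=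
  exists t : R, 0 <= t <= 1 /\ F = P + t *: (Q - P).

From HB Require Import structures.
From mathcomp Require Import all_boot all_order all_algebra.
From mathcomp Require Import reals.
From mathcomp Require Import ring lra.

Set Implicit Arguments.
Unset Strict Implicit.
Unset Printing Implicit Defensive.
Import Order.TTheory GRing.Theory Num.Theory.
Local Open Scope ring_scope.

(* For a Euclidean structure S in which the ellipse has foci m + d, m - d and
   semi-major axis a, the focal radius is affine on the ellipse:
   a |x - (m + d)| = a^2 - <x - m, d>.  Squaring puts the ellipse on the quadric
   a^2 |x - m|^2 - <x - m, d>^2 = a^2 b^2, where b^2 = a^2 - |d|^2; a quadratic
   form that is constant on an ellipse M(x - c) = 1 is proportional to M, so this
   form is a^2 b^2 M.  On a chord PQ through the focus, dividing it in ratio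
   t : 1 - t, the two identities give b^2 = 2 a t (1 - t) |PQ| and
   b^2 = a^2 t (1 - t) M(PQ), hence 2 |PQ| = a M(PQ).  The right-hand side
   depends on S only through a. *)

Definition bform {R : pzRingType} {n : nat} (S : 'M[R]_n) (u v : 'rV[R]_n) : R :=
  (u *m S *m v^T) 0 0.

Section BilinearForm.
Variables (R : comPzRingType) (n : nat) (S : 'M[R]_n).

Lemma bformDl u v w : bform S (u + v) w = bform S u w + bform S v w.
Proof. by rewrite /bform !mulmxDl mxE. Qed.

Lemma bformDr u v w : bform S u (v + w) = bform S u v + bform S u w.
Proof. by rewrite /bform linearD /= mulmxDr mxE. Qed.

Lemma bformZl k u v : bform S (k *: u) v = k * bform S u v.
Proof. by rewrite /bform -!scalemxAl mxE. Qed.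

Lemma bformZr k u v : bform S u (k *: v) = k * bform S u v.
Proof. by rewrite /bform linearZ /= -scalemxAr mxE. Qed.

Lemma bformNl u v : bform S (- u) v = - bform S u v.
Proof. by rewrite -scaleN1r bformZl mulN1r. Qed.

Lemma bformNr u v : bform S u (- v) = - bform S u v.
Proof. by rewrite -scaleN1r bformZr mulN1r. Qed.

Lemma bformBl u v w : bform S (u - v) w = bform S u w - bform S v w.
Proof. by rewrite bformDl bformNl. Qed.

Lemma bformC : S^T = S -> forall u v, bform S u v = bform S v u.
Proof.
move=> ST u v; have tr0 (A : 'M[R]_1) : A 0 0 = A^T 0 0 by rewrite mxE.
by rewrite /bform tr0 trmx_mul trmx_mul trmxK ST mulmxA.
Qed.

Lemma bform_rank_one d u v :
  bform (S *m d^T *m (d *m S)) u v = bform S u d * bform S d v.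
Proof.
by rewrite /bform !mulmxA -[u *m S *m d^T *m d *m S]mulmxA -mulmxA mxE big_ord1.
Qed.

End BilinearForm.

Lemma orthogonal_vector_exists (F : fieldType) (n : nat)
    (S : 'M[F]_n.+2) (u : 'rV[F]_n.+2) :
  exists2 v, v != 0 & bform S v u = 0.
Proof.
set A := S *m u^T.
have : kermx A != 0.
  by rewrite -mxrank_eq0 mxrank_ker -lt0n subn_gt0 (leq_ltn_trans (rank_leq_col A)).
case: (pickP (fun i => row i (kermx A) != 0)) => [i nz _|all0]; last first.
  by case/eqP; apply/row_matrixP => i; rewrite row0; apply/eqP/negbFE/all0.
exists (row i (kermx A)) => //.
by rewrite /bform -mulmxA -row_mul mulmx_ker row0 mxE.
Qed.

Section QuadraticForm.
Variables (R : realType) (S : 'M[R]_2).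

Lemma qform_bform v : qform S v = bform S v v.
Proof. by []. Qed.

Lemma qformD u v : qform S (u + v) = qform S u + (bform S u v + bform S v u) + qform S v.
Proof. by rewrite !qform_bform !bformDl !bformDr !addrA. Qed.

Lemma qformZ k v : qform S (k *: v) = k ^+ 2 * qform S v.
Proof. by rewrite !qform_bform bformZl bformZr mulrA expr2. Qed.

Lemma qformN v : qform S (- v) = qform S v.
Proof. by rewrite -scaleN1r qformZ sqrrN expr1n mul1r. Qed.

Lemma qform0 : qform S 0 = 0.
Proof. by rewrite -(scale0r 0) qformZ expr0n mul0r. Qed.

Lemma qform_lerp u w t :
  qform S (u + t *: (w - u)) =
  (1 - t) * qform S u + t * qform S w - t * (1 - t) * qform S (w - u).
Proof.
have [v ->] : exists v, w = u + v by exists (w - u); rewrite addrC subrK.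
by rewrite [u + v]addrC addrK !qformD qformZ bformZl bformZr; ring.
Qed.

Lemma slenZ k v : slen S (k *: v) = `|k| * slen S v.
Proof. by rewrite /slen qformZ sqrtrM ?sqr_ge0 // sqrtr_sqr. Qed.

Lemma slenN v : slen S (- v) = slen S v.
Proof. by rewrite /slen qformN. Qed.

Hypothesis S_pd : pos_def S.

Lemma qform_ge0 v : 0 <= qform S v.
Proof. by have [->|/S_pd.2/ltW //] := eqVneq v 0; rewrite qform0. Qed.

Lemma slen_sqr v : slen S v ^+ 2 = qform S v.
Proof. by rewrite sqr_sqrtr // qform_ge0. Qed.

Lemma scale_unit_vector w : exists k y, qform S y = 1 /\ w = k *: y.
Proof.
have unit v : v != 0 -> qform S ((slen S v)^-1 *: v) = 1.
  by move=> /S_pd.2 qv_gt0; rewrite qformZ exprVn slen_sqr mulVf // gt_eqF.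
have [w0|wn0] := eqVneq w 0; last first.
  exists (slen S w), ((slen S w)^-1 *: w); split; first exact: unit.
  by rewrite scalerA divff ?scale1r // sqrtr_eq0 -ltNge S_pd.2.
have e0 : const_mx 1 != 0 :> 'rV[R]_2.
  by apply/eqP => /matrixP/(_ 0 0)/eqP; rewrite !mxE oner_eq0.
by exists 0, ((slen S (const_mx 1))^-1 *: const_mx 1); rewrite w0 scale0r unit.
Qed.

End QuadraticForm.

Lemma qform_proportional (R : realType) (K M : 'M[R]_2) (e : 'rV[R]_2) (beta : R) :
  pos_def M ->
  (forall y, qform M y = 1 -> qform K (e + y) = beta /\ qform K (e - y) = beta) ->
  forall w, qform K w = beta * qform M w.
Proof.
move=> M_pd onE.
pose p y := bform K e y + bform K y e.
have unitE y : qform M y = 1 -> p y = 0 /\ qform K e + qform K y = beta.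
  by move=> /onE[]; rewrite !qformD qformN bformNl bformNr /p; lra.
have p0 w : p w = 0.
  have [k [y [/unitE[py _] ->]]] := scale_unit_vector M_pd w.
  by rewrite /p bformZl bformZr -mulrDr -/(p y) py mulr0.
have Ke0 : qform K e = 0 by move: (p0 e); rewrite /p qform_bform; lra.
move=> w; have [k [y [My ->]]] := scale_unit_vector M_pd w.
have [_] := unitE y My; rewrite Ke0 add0r => Ky.
by rewrite !qformZ My Ky mulr1 mulrC.
Qed.

Section FocalChord.
Variables (R : realType) (E : 'rV[R]_2 -> Prop) (M S : 'M[R]_2).
Variables (c m d : 'rV[R]_2) (a : R).
Hypotheses (M_pd : pos_def M) (S_pd : pos_def S).
Hypothesis E_quadric : forall x, E x <-> qform M (x - c) = 1.
Hypothesis E_foci : foci_axis S E (m + d) (m - d) a.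

Let K := a ^+ 2 *: S - S *m d^T *m (d *m S).
(* [b2] is the squared semi-minor axis. *)
Let b2 := a ^+ 2 - qform S d.

Let a_gt0 : 0 < a. Proof. exact: E_foci.1. Qed.
Let bformSC := bformC S_pd.1.

Lemma focal_radius x : E x -> a * slen S (x - (m + d)) = a ^+ 2 - bform S (x - m) d.
Proof.
move=> /(E_foci.2 x); set r := slen S _ => sum2a.
have r2 : r ^+ 2 = qform S ((x - m) - d) by rewrite slen_sqr // opprD addrA.
have r'2 : (2 * a - r) ^+ 2 = qform S ((x - m) + d).
  by rewrite -sum2a addrAC subrr add0r slen_sqr // opprB addrA addrAC.
move: r2 r'2; rewrite !(qformD _ (x - m)) qformN bformNl bformNr (bformSC d).
lra.
Qed.

Lemma qformK v : qform K v = a ^+ 2 * qform S v - bform S v d ^+ 2.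
Proof.
rewrite qform_bform /bform mulmxBr mulmxBl -scalemxAr -scalemxAl 2!mxE.
rewrite [X in _ + X]mxE -/(bform (S *m d^T *m (d *m S)) v v).
by rewrite bform_rank_one (bformSC d) expr2.
Qed.

Lemma focal_quadric x : E x -> qform K (x - m) = a ^+ 2 * b2.
Proof.
move=> Ex; have r2 := slen_sqr S_pd (x - (m + d)).
have := congr1 (fun r => r ^+ 2) (focal_radius Ex); rewrite /= exprMn {}r2.
rewrite opprD addrA (qformD _ (x - m)) qformN bformNr bformNl (bformSC d).
by rewrite qformK /b2; lra.
Qed.

Lemma qformK_proportional w : qform K w = a ^+ 2 * b2 * qform M w.
Proof.
have onE x : qform M (x - c) = 1 -> qform K (x - m) = a ^+ 2 * b2.
  by move/E_quadric/focal_quadric.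
apply: (qform_proportional (e := c - m)) => // y My; split.
  by rewrite -addrAC onE // addrAC subrr add0r.
by rewrite -addrAC onE // addrAC subrr add0r qformN.
Qed.

Lemma b2_gt0 : 0 < b2.
Proof.
have [v v_neq0 vd0] := orthogonal_vector_exists S d.
have := qformK_proportional v; rewrite qformK vd0 expr0n /= subr0 => e.
have : 0 < a ^+ 2 * b2 * qform M v by rewrite -e mulr_gt0 ?exprn_gt0 ?S_pd.2.
by rewrite pmulr_lgt0 ?M_pd.2 // pmulr_rgt0 // exprn_gt0.
Qed.

Lemma centered_focal_chord_length P Q :
  E P -> E Q -> P != Q -> on_segment P Q (m + d) ->
  2 * slen S (Q - P) = a * qform M (Q - P).
Proof.
move=> EP EQ PQ [t [/andP[t0 t1] eF]].
set v := Q - P in eF *; set L := slen S v.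
have QPm : Q - m - (P - m) = v by rewrite opprB addrA subrK.
have Fm : d = P - m + t *: (Q - m - (P - m)) by rewrite QPm addrAC -eF addrC addKr.
have rP : a * (t * L) = a ^+ 2 - bform S (P - m) d.
  by rewrite -focal_radius // eF opprD addrA subrr add0r slenN slenZ ger0_norm.
have rQ : a * ((1 - t) * L) = a ^+ 2 - bform S (Q - m) d.
  rewrite -focal_radius // eF opprD addrA -/v -{1}[v]scale1r -scalerBl.
  by rewrite slenZ ger0_norm ?subr_ge0.
have b2_chord : b2 = 2 * a * (t * (1 - t)) * L.
  have := congr1 (bform S ^~ d) Fm; rewrite /= bformDl bformZl (bformBl _ (Q - m)).
  rewrite /b2 qform_bform => ->.
  have -> : bform S (P - m) d = a ^+ 2 - a * (t * L) by lra.
  have -> : bform S (Q - m) d = a ^+ 2 - a * ((1 - t) * L) by lra.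
  ring.
have b2_qform : b2 = a ^+ 2 * (t * (1 - t)) * qform M v.
  have := congr1 (qform K) Fm; rewrite qform_lerp QPm.
  rewrite qformK (focal_quadric EP) (focal_quadric EQ) qformK_proportional -qform_bform.
  move=> quad; apply: (mulfI (lt0r_neq0 b2_gt0)); rewrite /b2 in quad *; lra.
have tt_neq0 : t * (1 - t) != 0.
  by apply: contraTneq b2_gt0 => tt0; rewrite b2_chord tt0 mulr0 mul0r ltxx.
apply: (mulfI (mulf_neq0 (lt0r_neq0 a_gt0) tt_neq0)).
have -> : a * (t * (1 - t)) * (2 * L) = b2 by rewrite b2_chord; ring.
by rewrite b2_qform; ring.
Qed.

End FocalChord.

Lemma focal_chord_length (R : realType) (E : 'rV[R]_2 -> Prop) (M S : 'M[R]_2)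
    (c F F' P Q : 'rV[R]_2) (a : R) :
  pos_def M -> pos_def S -> (forall x, E x <-> qform M (x - c) = 1) ->
  foci_axis S E F F' a -> E P -> E Q -> P != Q -> on_segment P Q F ->
  2 * slen S (Q - P) = a * qform M (Q - P).
Proof.
have [m [d [-> ->]]] : exists m d, F = m + d /\ F' = m - d.
  pose d := 2^-1 *: (F - F'); exists (F - d), d; split; first by rewrite subrK.
  have dd : d + d = F - F' by rewrite -scalerDl -[2^-1]mul1r -splitr scale1r.
  by rewrite -addrA -opprD dd subKr.
move=> M_pd S_pd E_quadric E_foci.
exact: (centered_focal_chord_length M_pd S_pd E_quadric E_foci (P := P) (Q := Q)).
Qed.

Theorem proposition8 (R : realType) (E : 'rV[R]_2 -> Prop)
  (S1 S2 : 'M[R]_2) (F1 F1' F2 F2' : 'rV[R]_2) (a1 a2 : R)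
  (P Q : 'rV[R]_2) :
  is_ellipse E ->
  pos_def S1 -> pos_def S2 ->
  foci_axis S1 E F1 F1' a1 ->
  foci_axis S2 E F2 F2' a2 ->
  E P -> E Q -> P != Q ->
  on_segment P Q F1 -> on_segment P Q F2 ->
  (major_axis a1 = major_axis a2 <-> slen S1 (Q - P) = slen S2 (Q - P)).
Proof.
move=> [M [c [M_pd E_quadric]]] S1_pd S2_pd foci1 foci2 EP EQ PQ F1PQ F2PQ.
have chord1 := focal_chord_length M_pd S1_pd E_quadric foci1 EP EQ PQ F1PQ.
have chord2 := focal_chord_length M_pd S2_pd E_quadric foci2 EP EQ PQ F2PQ.
have M_gt0 : 0 < qform M (Q - P) by apply: M_pd.2; rewrite subr_eq0 eq_sym.
rewrite /major_axis; split => [/(mulfI (lt0r_neq0 (ltr0n R 2)))|] eq_len.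
  by apply: (mulfI (lt0r_neq0 (ltr0n R 2))); rewrite chord1 chord2 eq_len.
by congr (2 * _); apply: (mulIf (lt0r_neq0 M_gt0)); rewrite -chord1 -chord2 eq_len.
Qed.
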